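(* Let $(\Omega,\mathcal{H},\mathbb{P})$ be a probability space with a filtration $\mathbb{U}=(\mathcal{U}_t)_{t\ge0}$, and let $(D_t)_{t\ge0}$ be a continuous $\mathbb{U}$-adapted real process (the income of an energy-efficient building) such that all conditional expectations below are well defined and finite. Let $R>0$, $\bar r>0$, $\alpha>\alpha^\star>0$, let $\mathfrak{c}:(\mathbb{R}_+)^2\to\mathbb{R}_+^*$ be continuous, let $\mathfrak{p}$ be a fixed energy source and $\mathfrak{f}(\cdot,\mathfrak{p}):\mathbb{R}_+\to\mathbb{R}_+^*$ differentiable, and let $\delta:\mathbb{R}_+\to\mathbb{R}_+$ be a deterministic $\mathcal{C}^1$ function for which there exist $0\le t_\circ<t_\star$ with $\delta$ constant on $[0,t_\circ]$ and constant on $[t_\star,\infty)$. Define $$C_t:=R\,\mathbb{E}\Big[\int_t^{\infty}e^{-\bar r(u-t)}D_u\,\mathrm{d}u\,\Big|\,\mathcal{U}_t\Big],$$ $$\mathcal{C}_{t,\delta}:=R\operatorname*{ess\,sup}_{\theta\ge t}\mathbb{E}\Big[\int_t^{\theta}\big[D_u-(\alpha-\alpha^\star)\mathfrak{f}(\delta_u,\mathfrak{p})\big]e^{-\bar r(u-t)}\mathrm{d}u-\mathfrak{c}(\alpha,\alpha^\star)e^{-\bar r(\theta-t)}+\int_\theta^\infty e^{-\bar r(u-t)}D_u\,\mathrm{d}u\,\Big|\,\mathcal{U}_t\Big],$$ the essential supremum being over (deterministic) times $\theta\in[t,\infty)$. Assume that (1) $\delta$ is non-decreasing on $\mathbb{R}_+$,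 and (2) $\mathfrak{f}(\cdot,\mathfrak{p})$ is non-decreasing on $\mathbb{R}_+$. Then for every $t\ge0$, $$\mathcal{C}_{t,\delta}=C_t-R\,X_{t,\delta},\qquad X_{t,\delta}:=\mathfrak{c}(\alpha,\alpha^\star)e^{-\bar r(\mathfrak{t}-t)}+(\alpha-\alpha^\star)\int_t^{\mathfrak{t}}\mathfrak{f}(\delta_u,\mathfrak{p})e^{-\bar r(u-t)}\,\mathrm{d}u,$$ where the optimal renovation date $\mathfrak{t}\in[t,+\infty]$ is given by: $\mathfrak{t}=t$ if $\mathfrak{f}(\delta_\theta,\mathfrak{p})-\bar r\frac{\mathfrak{c}(\alpha,\alpha^\star)}{\alpha-\alpha^\star}>0$ for all $\theta\in[t,\infty)$; $\mathfrak{t}=+\infty$ if $\mathfrak{f}(\delta_\theta,\mathfrak{p})-\bar r\frac{\mathfrak{c}(\alpha,\alpha^\star)}{\alpha-\alpha^\star}<0$ for all $\theta\in[t,\infty)$; and $\mathfrak{t}=\theta^\star$ where $\theta^\star$ is the unique solution in $[t,\infty)$ of $\mathfrak{f}(\delta_\theta,\mathfrak{p})=\bar r\frac{\mathfrak{c}(\alpha,\alpha^\star)}{\alpha-\alpha^\star}$ (when such a unique solution exists). For $\mathfrak{t}=+\infty$, $e^{-\bar r(\mathfrak{t}-t)}:=0$ and the integral is over $[t,\infty)$.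
   Context: $\delta_t$ is the (deterministic) carbon price at time $t$, $\mathfrak{f}(\delta,\mathfrak{p})$ the energy price of source $\mathfrak{p}$ at carbon price $\delta$, $\alpha$ and $\alpha^\star$ the energy consumption per square meter of the building and of an efficient building, $\mathfrak{c}(\alpha,\alpha^\star)$ the renovation cost, $R$ the surface and $\bar r$ the discount rate. *)

From HB Require Import structures.
From mathcomp Require Import all_boot all_order all_algebra.
From mathcomp Require Import all_classical all_reals all_analysis.
Set Implicit Arguments.
Unset Strict Implicit.
Unset Printing Implicit Defensive.
Import Order.TTheory GRing.Theory Num.Theory.
Import numFieldNormedType.Exports.
Local Open Scope classical_set_scope.
Local Open Scope ring_scope.

Section Defs.
Context {R : realType}.

Definition Gmeasurable {T : Type} (G : set (set T)) (f : T -> R) : Prop :=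
  forall B : set R, measurable B -> G (f @^-1` B).

Definition is_filtration {d} {T : measurableType d} (U : R -> set (set T)) :=
  (forall s, 0 <= s -> sigma_algebra setT (U s)) /\
  (forall s, 0 <= s -> U s `<=` measurable) /\
  (forall s u, 0 <= s -> s <= u -> U s `<=` U u).

Definition is_cond_exp {d} {T : measurableType d} (P : probability T R)
    (G : set (set T)) (X Y : T -> R) : Prop :=
  Gmeasurable G Y /\ P.-integrable setT (EFin \o Y) /\
  forall A, G A -> (\int[P]_(x in A) (Y x)%:E = \int[P]_(x in A) (X x)%:E)%E.

Definition is_ess_sup {d} {T : measurableType d} (P : probability T R)
    (I : set R) (F : R -> T -> R) (Z : T -> R) : Prop :=
  measurable_fun setT Z /\
  (forall i, I i -> {ae P, forall w, F i w <= Z w}) /\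
  (forall W : T -> R, measurable_fun setT W ->
     (forall i, I i -> {ae P, forall w, F i w <= W w}) ->
     {ae P, forall w, Z w <= W w}).

Definition rdiff_quot (f : R -> R) (x : R) := fun h : R => h^-1 * (f (x + h) - f x).
Definition rderivable (f : R -> R) (x : R) : Prop := cvg (rdiff_quot f x @ 0^'+).
Definition rderive (f : R -> R) (x : R) : R := lim (rdiff_quot f x @ 0^'+).

Definition differentiable_Rplus (f : R -> R) : Prop :=
  (forall x, 0 < x -> derivable f x 1) /\ rderivable f 0.
Definition deriv_Rplus (f : R -> R) (x : R) : R :=
  if x == 0 then rderive f 0 else derive1 f x.
Definition C1_Rplus (f : R -> R) : Prop :=
  differentiable_Rplus f /\ {within `[0, +oo[, continuous (deriv_Rplus f)}.

Definition opt_date (f delta : R -> R) (rbar c alpha alphas t : R)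
    (T : \bar R) : Prop :=
  let k := rbar * c / (alpha - alphas) in
  (T = t%:E /\ forall th, t <= th -> 0 < f (delta th) - k) \/
  (T = +oo%E /\ forall th, t <= th -> f (delta th) - k < 0) \/
  (exists ths, T = ths%:E /\ t <= ths /\ f (delta ths) = k /\
     forall th, t <= th -> f (delta th) = k -> th = ths).

Definition Xcost (f delta : R -> R) (rbar c alpha alphas t : R)
    (T : \bar R) : R :=
  match T with
  | x%:E => c * expR (- rbar * (x - t)) + (alpha - alphas) *
      \int[lebesgue_measure]_(u in `[t, x]) (f (delta u) * expR (- rbar * (u - t)))
  | +oo%E => (alpha - alphas) *
      \int[lebesgue_measure]_(u in `[t, +oo[) (f (delta u) * expR (- rbar * (u - t)))
  | -oo%E => 0
  end.

End Defs.

From HB Require Import structures.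
From mathcomp Require Import all_boot all_order all_algebra.
From mathcomp Require Import all_classical all_reals all_analysis.
From mathcomp Require Import ring lra measurable_realfun.
Import Order.TTheory GRing.Theory Num.Theory.
Import numFieldNormedType.Exports.
Local Open Scope classical_set_scope.
Local Open Scope ring_scope.

(* Write E u = exp (- rbar (u - t)), F = f \o delta, a = alpha - alphas and
   k = rbar c / a.  Path by path, the payoff of renovating at th >= t is
   int_t^oo E D - X th with X th = c E th + a int_t^th F E, so its conditional
   expectation is C_t - X th a.s., and the essential supremum over th is
   C_t - inf_th X th.  Since c E th = a k int_th^oo E, one has
   X th = X(+oo) + a int_th^oo (k - F) E, whose variation in th has the sign
   of F - k.  As F is nondecreasing, X decreases until F crosses the level k
   and increases afterwards: the infimum is attained at t when F > k, at the
   crossing date when F reaches k, and approached as th -> +oo when F < k. *)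

Definition is_inf_on {T : Type} {R : numDomainType} (A : set T) (g : T -> R) (m : R) :=
  (forall x, A x -> m <= g x) /\ (forall e, 0 < e -> exists2 x, A x & g x <= m + e).

Lemma is_inf_on_min {T : Type} {R : numDomainType} (A : set T) (g : T -> R) x0 :
  A x0 -> (forall x, A x -> g x0 <= g x) -> is_inf_on A g (g x0).
Proof. by move=> Ax0 g_ge; split=> // e e_gt0; exists x0; rewrite // lerDl ltW. Qed.

Lemma nondecreasing_measurable_itvy {R : realType} (F : R -> R) (t : R) :
  (forall x y, t <= x -> x <= y -> F x <= F y) -> measurable_fun `[t, +oo[ F.
Proof.
move=> F_mono; pose Ft u := F (Num.max u t).
apply: (eq_measurable_fun Ft) => [u|].
  by rewrite inE /= in_itv /= andbT => tu; rewrite /Ft max_l.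
apply: nondecreasing_measurable => // x y xy.
by apply: F_mono; [rewrite le_max lexx orbT | exact: le_max2].
Qed.

Section discounted_cost.
Context {R : realType}.
Notation mu := (@lebesgue_measure R).
Variables (r t : R).
Hypothesis r_gt0 : 0 < r.
Local Notation disc u := (expR (- r * (u - t))).

Lemma continuous_disc : continuous (fun u => disc u).
Proof.
move=> u; apply: continuous_comp; last exact: continuous_expR.
apply: continuousM; first exact: cst_continuous.
by apply: continuousB; [exact: cvg_id | exact: cst_continuous].
Qed.

Lemma measurable_disc (A : set R) : measurable_fun A (fun u => disc u).
Proof. exact: measurable_funTS (continuous_measurable_fun continuous_disc). Qed.

Lemma disc_cvgy : disc u @[u --> +oo] --> 0.
Proof.
have -> : (fun u => disc u) = (fun z => expR (- z)) \o (fun u => r * (u - t)).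
  by apply/funext => u /=; rewrite mulNr.
apply: (cvg_comp _ _ (gt0_cvgMry r_gt0 (cvg_addrr (- t)))).
exact: cvgr_expR.
Qed.

Lemma is_derive_disc_primitive (u : R) : is_derive u (1 : R) (fun v => - (disc v / r)) (disc u).
Proof.
have -> : (fun v => - (disc v / r)) = (fun x => - r^-1 * expR x) \o (fun v => - r * (v - t)).
  by apply/funext => v /=; ring.
apply: is_derive_eq.
rewrite /GRing.scale /=; field; exact: lt0r_neq0.
Qed.

Lemma integral_disc_itvy a : (\int[mu]_(u in `[a, +oo[) (disc u)%:E = (disc a / r)%:E)%E.
Proof.
rewrite (ge0_continuous_FTC2y (F := fun v => - (disc v / r)) (l := 0)).
- by rewrite sub0e EFinN oppeK.
- by move=> u _; exact: expR_ge0.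
- exact/continuous_subspaceT/continuous_disc.
- rewrite -oppr0 -(mul0r r^-1); apply: cvgN; apply: cvgM; [exact: disc_cvgy | exact: cvg_cst].
- by move=> u _; have [] := is_derive_disc_primitive u.
- apply: cvg_at_right_filter; apply: cvgN; apply: cvgM;
    [exact: continuous_disc | exact: cvg_cst].
- by move=> u _; rewrite derive1E; have [_ ->] := is_derive_disc_primitive u.
Qed.

Lemma integrable_disc a : mu.-integrable `[a, +oo[ (EFin \o (fun u => disc u)).
Proof.
apply/integrableP; split.
  by apply/measurable_EFinP; exact: measurable_disc.
under eq_integral => u _ do rewrite /comp abse_EFin ger0_norm ?expR_ge0//.
by rewrite integral_disc_itvy // ltry.
Qed.

Lemma integrable_scaled_disc b a :
  mu.-integrable `[a, +oo[ (EFin \o (fun u => b * disc u)).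
Proof. exact: (eq_integrable _ _ _ _ (integrableZl _ b (integrable_disc a))). Qed.

Lemma Rintegral_disc_itvoy a : \int[mu]_(u in `]a, +oo[) disc u = disc a / r.
Proof.
rewrite Rintegral_itv_obnd_cbnd; last first.
  by apply: integrableS (integrable_disc a) => //; apply: subset_itvr; rewrite bnd_simp.
by rewrite /Rintegral integral_disc_itvy.
Qed.

Lemma integrable_disc_shift (g : R -> R) : 0 <= t ->
  mu.-integrable `[0, +oo[ (fun u => (expR (- r * u) * g u)%:E) ->
  mu.-integrable `[t, +oo[ (EFin \o (fun u => disc u * g u)).
Proof.
move=> t_ge0 ig.
have ig_t : mu.-integrable `[t, +oo[ (fun u => (expR (r * t))%:E * (expR (- r * u) * g u)%:E)%E.
  apply: integrableS (integrableZl _ _ ig) => //.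
  by apply: subset_itvr; rewrite bnd_simp.
apply: (eq_integrable _ _ _ _ ig_t) => // u _ /=.
by rewrite -EFinM mulrA -expRD; congr (expR _ * _)%:E; ring.
Qed.

Variables (f delta : R -> R) (c alpha alphas : R).
Hypothesis alphas_lt : alphas < alpha.
Hypothesis measurable_F : measurable_fun `[t, +oo[ (fun u => f (delta u)).
Hypothesis F_ge0 : forall u, t <= u -> 0 <= f (delta u).
Hypothesis F_bounded : exists M, forall u, t <= u -> f (delta u) <= M.
Local Notation F u := (f (delta u)).
Local Notation a := (alpha - alphas).
Local Notation k := (r * c / (alpha - alphas)).

Lemma integrable_Fdisc : mu.-integrable `[t, +oo[ (EFin \o (fun u => F u * disc u)).
Proof.
have [M F_le] := F_bounded.
apply: (le_integrable _ _ _ (integrable_scaled_disc M t)) => //.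
  by apply/measurable_EFinP; apply: measurable_funM => //; exact: measurable_disc.
move=> u; rewrite /= in_itv /= andbT => tu.
have M_ge0 : 0 <= M := le_trans (F_ge0 _ tu) (F_le _ tu).
by rewrite lee_fin !normrM ler_wpM2r // !ger0_norm ?F_le ?F_ge0.
Qed.

Definition excess_cost x := \int[mu]_(u in `]x, +oo[) ((k - F u) * disc u).

Let a_gt0 : 0 < a. Proof. by rewrite subr_gt0. Qed.

Let integrable_itvy_sub (g : R -> R) x : t <= x ->
  mu.-integrable `[t, +oo[ (EFin \o g) -> mu.-integrable `]x, +oo[ (EFin \o g).
Proof. by move=> tx; apply: integrableS => //; apply: subset_itvr; rewrite bnd_simp. Qed.

Lemma integrable_excess_integrand :
  mu.-integrable `[t, +oo[ (EFin \o (fun u => (k - F u) * disc u)).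
Proof.
apply: (eq_integrable _ _ _ _ (integrableB _ (integrable_scaled_disc k t) integrable_Fdisc)) => //.
by move=> u _ /=; rewrite -EFinB mulrBl.
Qed.

Lemma excess_costE x : t <= x ->
  excess_cost x = k * (disc x / r) - \int[mu]_(u in `]x, +oo[) (F u * disc u).
Proof.
move=> tx; rewrite /excess_cost.
under eq_Rintegral do rewrite mulrBl.
rewrite RintegralB //; last 2 first.
- exact/integrable_itvy_sub/integrable_scaled_disc.
- exact/integrable_itvy_sub/integrable_Fdisc.
rewrite RintegralZl ?Rintegral_disc_itvoy //.
by apply: integrableS (integrable_disc x) => //; apply: subset_itvr; rewrite bnd_simp.
Qed.

Lemma Xcost_excess x : t <= x ->
  Xcost f delta r c alpha alphas t x%:E =
  Xcost f delta r c alpha alphas t +oo%E + a * excess_cost x.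
Proof.
move=> tx /=; rewrite excess_costE //.
have := Rintegral_itvB integrable_Fdisc (a := BLeft t) (b := BInfty _ false) (x := x).
rewrite !bnd_simp => /(_ tx isT) <-.
by field; rewrite !lt0r_neq0.
Qed.

Lemma excess_costB x y : t <= x -> x <= y ->
  excess_cost x - excess_cost y = \int[mu]_(u in `]x, y]) ((k - F u) * disc u).
Proof.
move=> tx xy.
have := Rintegral_itvB (integrable_itvy_sub _ _ tx integrable_excess_integrand)
  (x := y) (b := BInfty _ false).
rewrite !bnd_simp => /(_ xy isT); rewrite /excess_cost => <-.
by rewrite opprB addrC subrK.
Qed.

Lemma excess_cost_ge0 x : (forall u, x < u -> F u <= k) -> 0 <= excess_cost x.
Proof.
move=> F_le; apply: Rintegral_ge0 => u; rewrite /= in_itv /= andbT => xu.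
by rewrite mulr_ge0 ?expR_ge0 // subr_ge0 F_le.
Qed.

Lemma excess_cost_le x : t <= x -> excess_cost x <= k * (disc x / r).
Proof.
move=> tx; rewrite excess_costE // lerBlDr lerDl.
apply: Rintegral_ge0 => u; rewrite /= in_itv /= andbT => xu.
by rewrite mulr_ge0 ?expR_ge0 // F_ge0 // (le_trans tx (ltW xu)).
Qed.

Lemma excess_cost_min x0 : t <= x0 ->
  (forall u, t < u <= x0 -> F u <= k) -> (forall u, x0 < u -> k <= F u) ->
  forall y, t <= y -> excess_cost x0 <= excess_cost y.
Proof.
move=> tx0 F_le F_ge y ty.
have [yx0 | x0y] := leP y x0.
  rewrite -subr_ge0 excess_costB //; apply: Rintegral_ge0 => u.
  rewrite /= in_itv /= => /andP[yu ux0].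
  by rewrite mulr_ge0 ?expR_ge0 // subr_ge0 F_le // (le_lt_trans ty yu).
rewrite -subr_le0 excess_costB ?(ltW x0y) //.
have -> : 0 = \int[mu]_(u in `]x0, y]) (0 : R) by rewrite Rintegral_cst // mul0r.
apply: le_Rintegral => //.
- apply: integrableS integrable_excess_integrand => // u.
  by rewrite /= !in_itv /= andbT => /andP[x0u _]; exact: le_trans tx0 (ltW x0u).
- exact: (eq_integrable _ _ _ _ (integrable0 _ _)).
move=> u; rewrite /= in_itv /= => /andP[x0u _].
by rewrite mulr_le0_ge0 ?expR_ge0 // subr_le0 F_ge.
Qed.

Local Notation X T := (Xcost f delta r c alpha alphas t T).

Lemma Xcost_min x0 : t <= x0 ->
  (forall u, t < u <= x0 -> F u <= k) -> (forall u, x0 < u -> k <= F u) ->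
  is_inf_on [set th | t <= th] (fun th => X th%:E) (X x0%:E).
Proof.
move=> tx0 F_le F_ge; apply: is_inf_on_min => // y ty.
by rewrite !Xcost_excess // lerD2l ler_pM2l //; exact: excess_cost_min.
Qed.

Lemma Xcost_inf_infty : (forall u, t < u -> F u <= k) ->
  is_inf_on [set th | t <= th] (fun th => X th%:E) (X +oo%E).
Proof.
move=> F_le; split=> [y ty|e e_gt0].
  rewrite Xcost_excess // lerDl mulr_ge0 ?(ltW a_gt0) //.
  apply: excess_cost_ge0 => u yu; apply: F_le; exact: le_lt_trans ty yu.
have c_disc_small : \forall x \near +oo, c * disc x < e.
  apply: (@cvgr_lt _ _ _ _ _ 0) e_gt0; rewrite -(mulr0 c).
  exact: (cvgM (cvg_cst c) disc_cvgy).
have [x tx /ltW c_disc_le] := pinfty_ex_ge (num_real t) c_disc_small.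
exists x => //; rewrite Xcost_excess // lerD2l; apply: le_trans c_disc_le.
have -> : c * disc x = a * (k * (disc x / r)) by field; rewrite !lt0r_neq0.
by rewrite ler_pM2l //; exact: excess_cost_le.
Qed.

Lemma opt_date_Xcost_inf T : (forall x y, t <= x -> x <= y -> F x <= F y) ->
  opt_date f delta r c alpha alphas t T ->
  is_inf_on [set th | t <= th] (fun th => X th%:E) (X T).
Proof.
move=> F_mono [[-> F_gt]|[[-> F_lt]|[x0 [-> [tx0 [F_x0 _]]]]]].
- apply: Xcost_min => // u; first by move=> /andP[tu ut]; have := lt_le_trans tu ut; rewrite ltxx.
  by move=> tu; have := F_gt u (ltW tu); rewrite subr_gt0 => /ltW.
- by apply: Xcost_inf_infty => u tu; have := F_lt u (ltW tu); rewrite subr_lt0 => /ltW.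
- apply: Xcost_min => // u; last by move=> x0u; rewrite -F_x0 F_mono // ltW.
  by move=> /andP[tu ux0]; rewrite -F_x0 F_mono // ltW.
Qed.

Lemma payoff_Xcost (g : R -> R) th :
  mu.-integrable `[t, +oo[ (EFin \o (fun u => disc u * g u)) -> t <= th ->
  \int[mu]_(u in `[t, th]) ((g u - a * F u) * disc u) - c * disc th
    + \int[mu]_(u in `[th, +oo[) (disc u * g u)
  = \int[mu]_(u in `[t, +oo[) (disc u * g u) - X th%:E.
Proof.
move=> ig tth.
have sub_tth : `[t, th] `<=` `[t, +oo[ by move=> u; rewrite /= !in_itv /= andbT => /andP[].
have iFdisc : mu.-integrable `[t, th] (EFin \o (fun u => F u * disc u)).
  exact: integrableS integrable_Fdisc.
have split_payoff : \int[mu]_(u in `[t, th]) ((g u - a * F u) * disc u) =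
    \int[mu]_(u in `[t, th]) (disc u * g u) - a * \int[mu]_(u in `[t, th]) (F u * disc u).
  under eq_Rintegral do rewrite mulrBl [g _ * _]mulrC -mulrA.
  rewrite RintegralB //; last 2 first.
  - exact: integrableS ig.
  - exact: (eq_integrable _ _ _ _ (integrableZl _ a iFdisc)).
  by rewrite RintegralZl.
have split_tail : \int[mu]_(u in `[th, +oo[) (disc u * g u) =
    \int[mu]_(u in `[t, +oo[) (disc u * g u) - \int[mu]_(u in `[t, th]) (disc u * g u).
  rewrite -(Rintegral_itv_obnd_cbnd (r := th)); last first.
    by apply: integrableS ig => //; apply: subset_itvr; rewrite bnd_simp.
  have := Rintegral_itvB ig (a := BLeft t) (b := BInfty _ false) (x := th).
  by rewrite !bnd_simp => /(_ tth isT) <-.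
rewrite split_payoff split_tail /=; ring.
Qed.

End discounted_cost.

Section conditional_expectation.
Context {R : realType} {d : measure_display} {Omega : measurableType d}.
Context {P : probability Omega R} {G : set (set Omega)}.
Hypotheses (G_sigma : sigma_algebra setT G) (G_sub : G `<=` measurable).

Lemma Gmeasurable_measurable {Y : Omega -> R} :
  Gmeasurable G Y -> measurable_fun setT Y.
Proof. by move=> GY _ B mB; rewrite setTI; apply: G_sub; exact: GY. Qed.

Lemma Gmeasurable_comp (Y : Omega -> R) (h : R -> R) :
  measurable_fun setT h -> Gmeasurable G Y -> Gmeasurable G (h \o Y).
Proof.
move=> mh GY B mB; rewrite comp_preimage; apply: GY.
by have := mh measurableT B mB; rewrite setTI.
Qed.

Lemma Gmeasurable_lt (Y1 Y2 : Omega -> R) :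
  Gmeasurable G Y1 -> Gmeasurable G Y2 -> G [set w | Y2 w < Y1 w].
Proof.
(* On the measurable type generated by [G], G-measurability is plain measurability. *)
pose GT := g_sigma_algebraType G.
have GT_measurable (Y : Omega -> R) :
    Gmeasurable G Y -> measurable_fun [set: GT] (Y : GT -> R).
  by move=> GY _ B mB; rewrite setTI /measurable /= (sigma_algebra_id G_sigma); exact: GY.
move=> /GT_measurable GY1 /GT_measurable GY2.
have := measurable_funB GY1 GY2 measurableT (measurable_itv `]0, +oo[).
rewrite setTI /measurable /= (sigma_algebra_id G_sigma).
by congr G; apply/seteqP; split => w /=; rewrite in_itv /= andbT subr_gt0.
Qed.

Lemma Gintegral_eq_ae_le {Y1 Y2 : Omega -> R} :
  Gmeasurable G Y1 -> Gmeasurable G Y2 ->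
  P.-integrable setT (EFin \o Y1) -> P.-integrable setT (EFin \o Y2) ->
  (forall A, G A -> (\int[P]_(x in A) (Y1 x)%:E = \int[P]_(x in A) (Y2 x)%:E)%E) ->
  {ae P, forall w, Y1 w <= Y2 w}.
Proof.
move=> GY1 GY2 iY1 iY2 Y12.
pose S := [set w | Y2 w < Y1 w].
have GS : G S by exact: Gmeasurable_lt.
have mS : measurable S := G_sub _ GS.
have mY12 : measurable_fun S (fun w => (Y1 w - Y2 w)%:E).
  apply/measurable_EFinP; apply: measurable_funB;
  exact/measurable_funTS/Gmeasurable_measurable.
have : (\int[P]_(x in S) `|(Y1 x - Y2 x)%:E| = 0)%E.
  transitivity (\int[P]_(x in S) ((Y1 x)%:E - (Y2 x)%:E))%E.
    by apply: eq_integral => x; rewrite inE /= => Sx; rewrite gtr0_norm ?subr_gt0.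
  rewrite integralB_EFin //; [|exact: integrableS iY1|exact: integrableS iY2].
  by rewrite Y12 // subee // integrable_fin_num //; exact: integrableS iY2.
move/(ae_eq_integral_abs _ mS mY12); apply: filterS => w Y12w.
rewrite leNgt; apply/negP => Sw.
by move: (Y12w Sw) => /= /eqP; rewrite eqe subr_eq0 => /eqP eqY; rewrite eqY ltxx in Sw.
Qed.

Lemma is_cond_exp_unique {X Y1 Y2 : Omega -> R} :
  is_cond_exp P G X Y1 -> is_cond_exp P G X Y2 -> {ae P, forall w, Y1 w = Y2 w}.
Proof.
move=> [GY1 [iY1 Y1E]] [GY2 [iY2 Y2E]].
have Y12 A : G A -> (\int[P]_(x in A) (Y1 x)%:E = \int[P]_(x in A) (Y2 x)%:E)%E.
  by move=> GA; rewrite Y1E ?Y2E.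
have := Gintegral_eq_ae_le GY1 GY2 iY1 iY2 Y12.
have := Gintegral_eq_ae_le GY2 GY1 iY2 iY1 (fun A GA => esym (Y12 A GA)).
by apply: filterS2 => w Y21 Y12w; apply/eqP; rewrite eq_le Y12w Y21.
Qed.

Lemma is_cond_exp_subr {X Y : Omega -> R} (m : R) :
  P.-integrable setT (EFin \o X) -> is_cond_exp P G X Y ->
  is_cond_exp P G (fun w => X w - m) (fun w => Y w - m).
Proof.
move=> iX [GY [iY YE]]; split; last split.
- by apply: (Gmeasurable_comp _ (fun x => x - m)) => //; exact: measurable_funB.
- exact: (eq_integrable _ _ _ _ (integrableB _ iY (finite_measure_integrable_cst P m measurableT))).
move=> A GA; have mA := G_sub _ GA.
have im := finite_measure_integrable_cst P m mA.
rewrite (integralB_EFin _ _ im) //; last exact: integrableS iY.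
by rewrite (integralB_EFin _ _ im) ?YE //; exact: integrableS iX.
Qed.

Lemma eq_is_cond_exp {X1 X2 Y : Omega -> R} :
  is_cond_exp P G X1 Y -> X1 =1 X2 -> is_cond_exp P G X2 Y.
Proof. by move=> + /funext X12; rewrite X12. Qed.

End conditional_expectation.

Lemma is_ess_sup_sub_inf {R : realType} {d : measure_display} {Omega : measurableType d}
    {P : probability Omega R} {A : set R} {Y : R -> Omega -> R} {Z V : Omega -> R}
    {g : R -> R} {m : R} :
  measurable_fun setT V -> is_ess_sup P A Y Z ->
  (forall th, A th -> {ae P, forall w, Y th w = V w - g th}) ->
  is_inf_on A g m -> {ae P, forall w, Z w = V w - m}.
Proof.
move=> mV [_ [Y_le_Z Z_least]] YE [m_le g_approx].
have Z_le : {ae P, forall w, Z w <= V w - m}.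
  apply: Z_least => [|th Ath]; first by apply: measurable_funB.
  by apply: filterS (YE th Ath) => w ->; rewrite lerD2l lerN2 m_le.
(* Approach [m] along a sequence, so that only countably many a.e. statements are needed. *)
have /choice[s sP] : forall n : nat, exists th, A th /\ g th <= m + n.+1%:R^-1.
  move=> n; have [|th Ath gth] := g_approx n.+1%:R^-1; first by rewrite invr_gt0.
  by exists th.
have Z_ge : {ae P, forall w n, V w - (m + n.+1%:R^-1) <= Z w}.
  apply: ae_foralln => n; have [Asn gsn] := sP n.
  apply: filterS2 (YE _ Asn) (Y_le_Z _ Asn) => w -> YZ.
  by apply: le_trans YZ; rewrite lerD2l lerN2.
apply: filterS2 Z_le Z_ge => w Z_le_w Z_ge_w; apply/eqP; rewrite eq_le Z_le_w /=.
rewrite leNgt; apply/negP => /ltr_add_invr[n].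
by have := Z_ge_w n; move: (n.+1%:R^-1) => e; lra.
Qed.

Theorem theorem1 (R : realType) (d : measure_display) (Omega : measurableType d)
  (P : probability Omega R) (U : R -> set (set Omega)) (D : R -> Omega -> R)
  (Rs rbar alpha alphas : R) (c : R -> R -> R) (f delta : R -> R) :
  is_filtration U ->
  (forall t, 0 <= t -> Gmeasurable (U t) (D t)) ->
  (forall w, {within `[0, +oo[, continuous (fun u => D u w)}) ->
  (* well-definedness / finiteness of the quantities involved *)
  (forall w, lebesgue_measure.-integrable `[0, +oo[
                (fun u => (expR (- rbar * u) * D u w)%:E)) ->
  (forall t, 0 <= t -> P.-integrable setT
     (fun w => (\int[lebesgue_measure]_(u in `[t, +oo[)
                  (expR (- rbar * (u - t)) * D u w))%:E)) ->
  0 < Rs -> 0 < rbar -> 0 < alphas -> alphas < alpha ->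
  {within [set p : R * R | 0 <= p.1 /\ 0 <= p.2], continuous (fun p : R * R => c p.1 p.2)} ->
  (forall x y, 0 <= x -> 0 <= y -> 0 < c x y) ->
  (forall x, 0 <= x -> 0 < f x) ->
  differentiable_Rplus f ->
  (forall x, 0 <= x -> 0 <= delta x) ->
  C1_Rplus delta ->
  (exists t0 ts, 0 <= t0 /\ t0 < ts /\
     (forall u, 0 <= u <= t0 -> delta u = delta 0) /\
     (forall u, ts <= u -> delta u = delta ts)) ->
  (* (1) and (2) *)
  {in `[0, +oo[ &, {homo delta : x y / x <= y}} ->
  {in `[0, +oo[ &, {homo f : x y / x <= y}} ->
  forall t : R, 0 <= t ->
  forall Cv : Omega -> R,
    is_cond_exp P (U t)
      (fun w => \int[lebesgue_measure]_(u in `[t, +oo[) (expR (- rbar * (u - t)) * D u w))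
      Cv ->
  forall Y : R -> Omega -> R,
    (forall th, t <= th -> is_cond_exp P (U t)
      (fun w =>
         \int[lebesgue_measure]_(u in `[t, th])
            ((D u w - (alpha - alphas) * f (delta u)) * expR (- rbar * (u - t)))
         - c alpha alphas * expR (- rbar * (th - t))
         + \int[lebesgue_measure]_(u in `[th, +oo[) (expR (- rbar * (u - t)) * D u w))
      (Y th)) ->
  forall Z : Omega -> R, is_ess_sup P [set th | t <= th] Y Z ->
  forall T : \bar R, opt_date f delta rbar (c alpha alphas) alpha alphas t T ->
  {ae P, forall w, Rs * Z w = Rs * Cv w - Rs * Xcost f delta rbar (c alpha alphas) alpha alphas t T}.
Proof.
move=> U_filt _ _ D_int payoff_int _ r_gt0 _ alphas_lt _ _ f_gt0 _ delta_ge0 _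
  [_ [ts [_ [_ [_ delta_ts]]]]] delta_mono f_mono t t_ge0 Cv CvE Y YE Z ZE T TE.
have [G_sigma G_sub] := (U_filt.1 t t_ge0, U_filt.2.1 t t_ge0).
have F_mono x y : t <= x -> x <= y -> f (delta x) <= f (delta y).
  move=> tx xy; have x_ge0 := le_trans t_ge0 tx; have y_ge0 := le_trans x_ge0 xy.
  by apply: f_mono; rewrite ?in_itv /= ?andbT ?delta_ge0 //; apply: delta_mono;
    rewrite ?in_itv /= ?andbT.
have F_ge0 u : t <= u -> 0 <= f (delta u).
  by move=> tu; apply/ltW/f_gt0/delta_ge0; exact: le_trans tu.
have F_bounded : exists M, forall u, t <= u -> f (delta u) <= M.
  have ts_le : ts <= Num.max t ts by rewrite le_max lexx orbT.
  exists (f (delta (Num.max t ts))) => u tu.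
  have [|u_gt] := leP u (Num.max t ts); first exact: F_mono.
  by rewrite !delta_ts // ltW // (le_lt_trans ts_le u_gt).
have F_meas := nondecreasing_measurable_itvy (fun u => f (delta u)) t F_mono.
have Y_ae th : t <= th ->
    {ae P, forall w, Y th w = Cv w - Xcost f delta rbar (c alpha alphas) alpha alphas t th%:E}.
  move=> tth; apply: (is_cond_exp_unique G_sigma G_sub (YE th tth)).
  apply: eq_is_cond_exp (is_cond_exp_subr G_sub _ (payoff_int t t_ge0) CvE) _ => w.
  by apply/esym; apply: payoff_Xcost => //; exact: integrable_disc_shift.
have mCv := Gmeasurable_measurable G_sub CvE.1.
apply: filterS (is_ess_sup_sub_inf mCv ZE Y_ae _) => [w ->|]; first by rewrite mulrBr.
by apply: opt_date_Xcost_inf.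
Qed.
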